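(* Let $l\ge-1$ and $n\ge1$ be integers and let $(h,a)\in S_l\cap S_{l+n}$. Define $L_{(l+1)}=\phi\big(H^{(l+1)}+\sum_{k=0}^{l}a_kH^{(l-k)}\big)$ and $L_{(l+n+1)}=\phi\big(H^{(l+n+1)}+\sum_{k=0}^{l+n}a_kH^{(l+n-k)}\big)$. Then $L_{(l+1)}$ and $L_{(l+n+1)}$ are monic purely differential operators of orders $l+1$ and $l+n+1$ respectively, and the Lax operator $\mathcal L=\phi(z)$ of $h$ satisfies $\mathcal L^n=L_{(l+1)}^{-1}\,L_{(l+n+1)}$. Thus $\phi(S'_{l,l+n})$, where $S'_{l,l+n}=\mu(S_l\cap S_{l+n})$, consists of KP Lax operators whose $n$-th power is a ratio $L_{(l+1)}^{-1}L_{(l+n+1)}$ of two such differential operators (the Dickey–Krichever rational submanifold $\mathcal K_{l+1,n}$).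
   Context: Let $x$ be a space variable; all coefficients below are functions of $x$, and a subscript $x$ denotes $\partial_x$. Let $M$ be the affine space of formal Laurent series $h(z)=z+\sum_{j\ge1}h_j z^{-j}$, $A$ the affine space of formal Laurent series $a(z)=z+\sum_{j\ge0}a_j z^{-j}$, and $N=M\times A$; $\mu(h,a)=h$. The Faà di Bruno iterates of $h$ are $h^{(0)}=1$, $h^{(j+1)}=(\partial_x+h)h^{(j)}=\partial_x h^{(j)}+h\,h^{(j)}$ for all $j\in\mathbb Z$; for $j<0$ they are obtained by solving these recursions backwards from $h^{(0)}=1$, and $\{h^{(j)}\}_{j\in\mathbb Z}$ is a basis (over functions of $x$) of the algebra $L$ of formal Laurent series $\sum_{j\ge -n}k_jz^{-j}$. For $j\ge0$, the KP current $H^{(j)}$ is the unique Laurent series of the form $H^{(j)}=h^{(j)}+\sum_{l=0}^{j-2}p^j_l[h]\,h^{(l)}$, with the $p^j_l[h]$ differential polynomials in the $h_i$, such that $H^{(j)}=z^j+O(z^{-1})$. The Lax map $\phi:L\to\Psi DO$ (pseudodifferential operators in $\partial_x$) is the linear map defined by $\phi(f\,h^{(j)})=f\,\partial_x^{\,j}$ for all $j\in\mathbb Z$ and all $z$-independent functions $f$; the KP Lax operator is $\mathcal L=\phi(z)$. For an integer $l\ge-1$, $S_l\subset N$ is the set of pairs $(h,a)$ satisfying $z^l a=H^{(l+1)}+\sum_{m=0}^{l}a_mH^{(l-m)}$ (empty sum for $l=-1$). *)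

(* Formal Laurent series in z and pseudodifferential operators
   in d/dx, with coefficients in an abstract commutative differential ring
   (R, D) playing the role of "functions of x". *)
From HB Require Import structures.
From mathcomp Require Import all_boot all_order all_algebra.
From Stdlib Require Import ClassicalEpsilon.
Set Implicit Arguments. Unset Strict Implicit. Unset Printing Implicit Defensive.
Import Order.TTheory GRing.Theory Num.Theory.
Local Open Scope ring_scope.

Section Defs.
Variable R : comNzRingType.

(* A formal series: s k is the coefficient of z^k (resp. of d^k for a PsiDO). *)
Definition series := int -> R.

Definition bounded_by (s : series) (N : int) := forall k : int, N < k -> s k = 0.
Definition bounded (s : series) := exists N, bounded_by s N.

(* a chosen upper bound of the support (meaningful when s is bounded) *)
Definition deg (s : series) : int :=
  epsilon (inhabits 0%R) (fun N => bounded_by s N).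

Definition zrange (lo hi : int) : seq int :=
  if lo <= hi then [seq lo + t%:Z | t <- iota 0 (absz (hi - lo + 1))] else [::].

Definition sone : series := fun k => (k == 0)%:R.
Definition zser : series := fun k => (k == 1)%:R.
Definition sadd (f g : series) : series := fun k => f k + g k.
Definition sder (D : R -> R) (f : series) : series := fun k => D (f k).
Definition smul (f g : series) : series :=
  fun k => \sum_(i <- zrange (k - deg g) (deg f)) f i * g (k - i).

Definition hser (hc : nat -> R) : series :=
  fun k => if k == 1 then 1 else if k < 0 then hc (absz k) else 0.
Definition aser (ac : nat -> R) : series :=
  fun k => if k == 1 then 1 else if k <= 0 then ac (absz k) else 0.

Definition FdB (D : R -> R) (h : series) (hf : int -> series) :=
  (forall j, bounded (hf j)) /\ hf 0 = sone /\
  forall j : int, hf (j + 1) = sadd (sder D (hf j)) (smul h (hf j)).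

Definition KPcurrent (hf : int -> series) (j : nat) (Hj : series) :=
  (exists p : nat -> R,
      Hj = fun k => hf j%:Z k + \sum_(i < j.-1) p i * hf i%:Z k) /\
  forall k : int, 0 <= k -> Hj k = (k == j%:Z)%:R.

Definition Lgen (H : nat -> series) (ac : nat -> R) (l : int) : series :=
  fun k => H (absz (l + 1)) k + \sum_(m < absz (l + 1)) ac m * H (absz (l - m%:Z)) k.

Definition inS (H : nat -> series) (l : int) (ac : nat -> R) :=
  forall k : int, aser ac (k - l) = Lgen H ac l k.

(* Lax map phi : L -> PsiDO, phi(sum_j c_j h^(j)) = sum_j c_j d^j.
   phi k is the (unique) bounded-above coefficient family P with
   k = sum_j P_j h^(j), coefficientwise (for z^m only j >= m contribute). *)
Definition phi (hf : int -> series) (k : series) : series :=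
  epsilon (inhabits (fun _ => 0))
    (fun P => bounded P /\
       forall m : int, k m = \sum_(j <- zrange m (deg P)) P j * hf j m).

Definition binz (i : int) (k : nat) : int :=
  match i with
  | Posz n => ('C(n, k))%:Z
  | Negz n => (-1) ^+ k * ('C(n + k, k))%:Z
  end.

(* composition of pseudodifferential operators (P j = coefficient of d^j):
   (f d^i) o (g d^j) = sum_{k>=0} binom(i,k) f g^(k) d^(i+j-k) *)
Definition pmul (D : R -> R) (A B : series) : series :=
  fun m => \sum_(i <- zrange (m - deg B) (deg A))
             \sum_(k < absz (deg B - m + i + 1))
                (binz i k)%:~R * A i * iter k D (B (m - i + k%:Z)).

Definition pone : series := sone.
Definition ppow (D : R -> R) (A : series) (n : nat) : series :=
  iter n (fun X => pmul D X A) pone.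

Definition monic_diff (P : series) (p : int) :=
  P p = 1 /\ forall j : int, (j < 0 \/ p < j) -> P j = 0.

End Defs.

From HB Require Import structures.
From mathcomp Require Import all_boot all_order all_algebra.
From mathcomp Require Import zify ring.
From Stdlib Require Import ClassicalEpsilon FunctionalExtensionality.
Set Implicit Arguments. Unset Strict Implicit. Unset Printing Implicit Defensive.
Import Order.TTheory GRing.Theory Num.Theory.
Local Open Scope ring_scope.

(* The inverse [phiinv] of the Lax map sends [sum_j P_j d^j] to [sum_j P_j h^(j)].
   Since [h^(j+1) = (d_x + h) h^(j)], it turns left composition by [d] into
   [d_x + h]; through the Leibniz rule for composition this gives
   [phiinv (P o Q) = z^r phiinv P] whenever [phiinv Q = z^r].  For the Lax operator
   [L = phi z] this reads [phi (z^n k) = phi k o L^n].  The relations [S_l] and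
   [S_(l+n)] say that the Laurent series of [L_(l+n+1)] is [z^n] times the one of
   [L_(l+1)], hence [L_(l+n+1) = L_(l+1) o L^n].  Finally [L_(l+1)] is monic because
   the currents [H^(j)] are unitriangular in the basis [h^(j)], and a monic operator
   is invertible: its inverse solves a unitriangular system. *)

(** * Sums over integer ranges *)

Lemma mem_zrange a b i : (i \in zrange a b) = (a <= i <= b).
Proof.
rewrite /zrange; case: ifP => hab; last first.
  by rewrite in_nil; apply/esym/negbTE/negP => /andP[]; move/negbT: hab; lia.
apply/mapP/idP => [[t]|/andP[h1 h2]].
  by rewrite mem_iota => /andP[_ ht] ->; apply/andP; split; lia.
by exists (absz (i - a)); [rewrite mem_iota; apply/andP; split; lia | lia].
Qed.

Lemma uniq_zrange a b : uniq (zrange a b).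
Proof.
rewrite /zrange; case: ifP => // _.
by rewrite map_inj_uniq ?iota_uniq // => x y /eqP h; apply/eqP; lia.
Qed.

Lemma zrange1 a : zrange a a = [:: a].
Proof. by rewrite /zrange lexx subrr add0r /= addr0. Qed.

Lemma int_ind_updown (P : int -> Prop) : P 0 ->
  (forall j, P j -> P (j + 1)) -> (forall j, P (j + 1) -> P j) -> forall j, P j.
Proof.
move=> P0 Pup Pdown.
have Pnat n : P n%:Z /\ P (- n%:Z).
  elim: n => [|n [IHp IHn]]; first by rewrite oppr0.
  by split; [rewrite -addn1 PoszD; apply: Pup | apply: Pdown; rewrite -addn1 PoszD opprD addrNK].
by case=> n; [case: (Pnat n) | rewrite NegzE; case: (Pnat n.+1)].
Qed.

Lemma int_ind_down (P : int -> Prop) (N : int) : (forall j, N < j -> P j) ->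
  (forall M, (forall j, M < j -> P j) -> P M) -> forall j, P j.
Proof.
move=> PN Pstep.
have Pabove t : forall j, N - t%:Z < j -> P j.
  elim: t => [|t IH] j hj; first by apply: PN; lia.
  by case: (ltrP (N - t%:Z) j) => h; [apply: IH | apply: Pstep => i hi; apply: IH; lia].
by move=> j; apply: (Pabove (absz (N - j) + 1)%N); lia.
Qed.

Section ZrangeSums.
Variable R : comNzRingType.
Implicit Types (F : int -> R) (a b : int).

Lemma zsum_widen F a b a' b' :
  (forall i, a <= i <= b -> a' <= i <= b') ->
  (forall i, a' <= i <= b' -> ~~ (a <= i <= b) -> F i = 0) ->
  \sum_(i <- zrange a' b') F i = \sum_(i <- zrange a b) F i.
Proof.
move=> sub F0; rewrite (bigID (fun i => a <= i <= b)) /= [X in _ + X]big1_seq ?addr0.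
  rewrite -big_filter; apply/perm_big/uniq_perm; rewrite ?filter_uniq ?uniq_zrange //.
  by move=> i; rewrite mem_filter !mem_zrange; apply/andP/idP => [[]//|h]; split => //; apply: sub.
by move=> i /andP[hn]; rewrite mem_zrange => hi; apply: F0.
Qed.

Lemma zsum_supp F a b a' b' :
  (forall i, ~~ (a <= i <= b) -> F i = 0) -> (forall i, ~~ (a' <= i <= b') -> F i = 0) ->
  \sum_(i <- zrange a b) F i = \sum_(i <- zrange a' b') F i.
Proof.
move=> F0 F0'; rewrite -(@zsum_widen F a b (Num.min a a') (Num.max b b')); last 2 first.
- by move=> i; rewrite ge_min le_max; lia.
- by move=> i _; apply: F0.
by apply: zsum_widen => [i|i _]; [rewrite ge_min le_max; lia | apply: F0'].
Qed.

Lemma zsum_nil F a b : b < a -> \sum_(i <- zrange a b) F i = 0.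
Proof. by move=> ba; rewrite /zrange; case: ifP; [lia | rewrite big_nil]. Qed.

Lemma zsum1 F a b j : a <= j <= b -> (forall i, i != j -> F i = 0) ->
  \sum_(i <- zrange a b) F i = F j.
Proof.
move=> hj F0; rewrite (@zsum_widen F j j) ?zrange1 ?big_seq1 // => i.
  by move=> /andP[? ?]; have -> : i = j by lia.
by move=> _ hi; apply: F0; apply: contra hi => /eqP ->; rewrite !lexx.
Qed.

Lemma zsumD1 F a b j : a <= j <= b ->
  \sum_(i <- zrange a b) F i = F j + \sum_(i <- zrange a b | i != j) F i.
Proof. by move=> hj; rewrite (bigD1_seq j) ?mem_zrange ?uniq_zrange. Qed.

Lemma zsum_recr F a b : a <= b + 1 ->
  \sum_(i <- zrange a (b + 1)) F i = \sum_(i <- zrange a b) F i + F (b + 1).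
Proof.
move=> hab; rewrite (zsumD1 _ (j := b + 1)); last lia.
rewrite addrC; congr (_ + _); rewrite -big_filter.
apply/perm_big/uniq_perm; rewrite ?filter_uniq ?uniq_zrange //.
move=> i; rewrite mem_filter !mem_zrange; apply/andP/idP => [[/eqP ne /andP[? ?]]|/andP[? ?]].
  by apply/andP; split; lia.
by split; [apply/eqP; lia | apply/andP; split; lia].
Qed.

Lemma zsum_shift F a b r :
  \sum_(i <- zrange a b) F (i + r) = \sum_(i <- zrange (a + r) (b + r)) F i.
Proof.
rewrite /zrange (_ : (a + r <= b + r) = (a <= b)); last by lia.
case: ifP => _; last by rewrite !big_nil.
rewrite !big_map (_ : b + r - (a + r) + 1 = b - a + 1); last by lia.
by apply: eq_bigr => t _; congr F; lia.
Qed.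

Lemma zsum_kron F a b j :
  \sum_(i <- zrange a b) (i == j)%:R * F i = if a <= j <= b then F j else 0.
Proof.
case: ifP => hj; first by rewrite (@zsum1 _ _ _ j) ?eqxx ?mul1r // => i /negbTE ->; rewrite mul0r.
rewrite big1_seq // => i /andP[_]; rewrite mem_zrange.
by case: eqP => [-> hi | _ _]; [move: hj; rewrite hi | rewrite mul0r].
Qed.

Lemma sum_ord_vanishing (F : nat -> R) c c' c0 : (c0 <= c)%N -> (c0 <= c')%N ->
  (forall k, (c0 <= k)%N -> F k = 0) -> \sum_(k < c) F k = \sum_(k < c') F k.
Proof.
move=> le_c le_c' F0.
suff trunc d : (c0 <= d)%N -> \sum_(k < d) F k = \sum_(k < c0) F k by rewrite !trunc.
move=> le_d; rewrite -!(big_mkord xpredT) (@big_cat_nat _ _ _ c0 0 d _ _ (leq0n c0) le_d) /=.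
by rewrite [X in _ + X]big_nat_cond [X in _ + X]big1 ?addr0 // => k /andP[/andP[hk _] _]; apply: F0.
Qed.

End ZrangeSums.

Section Series.
Variable R : comNzRingType.
Implicit Types (s f g P : series R) (N : int).

Lemma bounded_deg s : bounded s -> bounded_by s (deg s).
Proof. by move=> hb; apply: epsilon_spec. Qed.

Lemma bounded_byW s N N' : N <= N' -> bounded_by s N -> bounded_by s N'.
Proof. by move=> le_N hN k hk; apply: hN; lia. Qed.

(* [zpow j] is [z^j] as a Laurent series and [d^j] as a pseudodifferential operator. *)
Definition zpow (j : int) : series R := fun k => (k == j)%:R.

Lemma zpow_bounded j : bounded_by (zpow j) j.
Proof. by move=> k hk; rewrite /zpow; case: eqP => // e; lia. Qed.

Lemma zpow_bounded_le j N : bounded_by (zpow j) N -> j <= N.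
Proof.
move=> hj; rewrite leNgt; apply/negP => hN.
by have := hj j hN; rewrite /zpow eqxx; apply/eqP; apply: oner_neq0.
Qed.

Definition zshift (r : int) s : series R := fun m => s (m - r).

Lemma zshift_bounded s N r : bounded_by s N -> bounded_by (zshift r s) (N + r).
Proof. by move=> hs k hk; apply: hs; lia. Qed.

Lemma monic_diff_bounded P p : monic_diff P p -> bounded_by P p.
Proof. by move=> [_ P0] j hj; apply: P0; right. Qed.

Lemma monic_zpow j : 0 <= j -> monic_diff (zpow j) j.
Proof.
move=> hj; split=> [|k hk]; first by rewrite /zpow eqxx.
by rewrite /zpow; case: eqP => // e; lia.
Qed.

Lemma monic_diff_lincomb (I : Type) (r : seq I) (a : I -> R) P (X : I -> series R)
    (p : int) (q : I -> int) :
  monic_diff P p -> (forall i, q i < p) -> (forall i, monic_diff (X i) (q i)) ->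
  monic_diff (fun k => P k + \sum_(i <- r) a i * X i k) p.
Proof.
move=> [Pp P0] hq hX; split.
  rewrite Pp big1 ?addr0 // => i _; case: (hX i) => _ ->; [by rewrite mulr0 | right; exact: hq].
move=> j hj; rewrite P0 // add0r big1 // => i _; case: (hX i) => _ ->; first by rewrite mulr0.
by case: hj => hj; [left | right; have := hq i; lia].
Qed.

Lemma smulE f g Nf Ng a b k :
  bounded_by f Nf -> bounded_by g Ng -> a <= k - Ng -> Nf <= b ->
  smul f g k = \sum_(i <- zrange a b) f i * g (k - i).
Proof.
move=> hf hg ha hb.
have out Nf' Ng' a' b' i : bounded_by f Nf' -> bounded_by g Ng' ->
    a' <= k - Ng' -> Nf' <= b' -> ~~ (a' <= i <= b') -> f i * g (k - i) = 0.
  move=> hf' hg' ha' hb' hi; case: (lerP i Nf') => hiF; last by rewrite hf' ?mul0r.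
  by rewrite hg' ?mulr0 //; lia.
have hdf := bounded_deg (ex_intro _ Nf hf); have hdg := bounded_deg (ex_intro _ Ng hg).
apply: zsum_supp => i; first exact: (out _ _ _ _ _ hdf hdg (lexx _) (lexx _)).
exact: (out _ _ _ _ _ hf hg ha hb).
Qed.

End Series.

Arguments zpow {R} j.

(** * Unitriangular systems *)

Section Unitriangular.
Variable R : comNzRingType.
Variables (s : int) (c : int -> int -> R).
Hypothesis c_diag : forall j, c j (j + s) = 1.

(* The system [tcomb N P = k] in the unknowns [P_j], [j <= N], has row [j + s]
   starting with the coefficient [1] at [P_j]. *)
Definition tcomb (N : int) (P : series R) : series R :=
  fun m => \sum_(j <- zrange (m - s) N) P j * c j m.

Lemma tcomb_inj P Q N : bounded_by P N -> bounded_by Q N -> tcomb N P = tcomb N Q -> P = Q.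
Proof.
move=> hP hQ PQ; apply: functional_extensionality.
apply: (@int_ind_down _ N) => [j hj|M IH]; first by rewrite hP ?hQ.
case: (ltrP N M) => hM; first by rewrite hP ?hQ.
have := congr1 (fun f => f (M + s)) PQ; rewrite /tcomb addrK !(zsumD1 _ (j := M)); try lia.
rewrite c_diag !mulr1 [X in _ + X = _]big_seq_cond [X in _ = _ + X]big_seq_cond.
rewrite (eq_bigr (fun j => Q j * c j (M + s))); first by move/addIr.
by move=> j /andP[]; rewrite mem_zrange => hj /eqP neq; rewrite IH //; lia.
Qed.

Section Solve.
Variables (k : series R) (K : int).
Hypothesis k_bounded : bounded_by k K.
Let N := K - s.

(* [fix_row t Q] fixes row [N - t + s] by adjusting the unknown [N - t]. *)
Definition fix_row (t : nat) (Q : series R) : series R := fun j =>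
  Q j + (j == N - t%:Z)%:R * (k (N - t%:Z + s) - tcomb N Q (N - t%:Z + s)).

Fixpoint tsolve (t : nat) : series R :=
  fix_row t (if t is t'.+1 then tsolve t' else fun=> 0).

Lemma fix_row_spec t Q :
  (forall j, N < j \/ j < N - t%:Z + 1 -> Q j = 0) ->
  (forall m, N - t%:Z + 1 <= m - s <= N -> tcomb N Q m = k m) ->
  (forall j, N < j \/ j < N - t%:Z -> fix_row t Q j = 0) /\
  (forall m, N - t%:Z <= m - s <= N -> tcomb N (fix_row t Q) m = k m).
Proof.
move=> Q0 Qrows; split=> [j hj|m hm].
  by rewrite /fix_row Q0; [case: eqP => e; [lia | rewrite mul0r addr0] | lia].
rewrite /tcomb /fix_row; set e := (k _ - _).
under eq_bigr do rewrite mulrDl -mulrA.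
rewrite big_split /= zsum_kron -/(tcomb N Q m).
case: ifP => hmt; last by rewrite addr0 Qrows //; lia.
have -> : m = N - t%:Z + s by lia.
by rewrite c_diag mulr1 /e addrC subrK.
Qed.

Lemma tsolve_spec t :
  (forall j, N < j \/ j < N - t%:Z -> tsolve t j = 0) /\
  (forall m, N - t%:Z <= m - s <= N -> tcomb N (tsolve t) m = k m).
Proof.
elim: t => [|t [IH0 IHrows]] /=; first by apply: fix_row_spec => [j|m] //; lia.
by apply: fix_row_spec => [j hj|m hm]; [apply: IH0 | apply: IHrows]; lia.
Qed.

Lemma tsolve_stable t d j : N - t%:Z <= j -> tsolve (t + d) j = tsolve t j.
Proof.
move=> hj; elim: d => [|d IH]; first by rewrite addn0.
by rewrite addnS /= /fix_row IH; case: eqP => e; [lia | rewrite mul0r addr0].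
Qed.

Lemma tcomb_surj : exists P, bounded_by P N /\ tcomb N P = k.
Proof.
pose P j := tsolve (absz (N - j)) j.
have P_bounded : bounded_by P N by move=> j hj; rewrite /P (proj1 (tsolve_spec _)) //; lia.
exists P; split => //; apply: functional_extensionality => m.
case: (ltrP N (m - s)) => hm; first by rewrite /tcomb zsum_nil ?k_bounded //; rewrite /N in hm; lia.
pose T := absz (N - (m - s))%R.
rewrite -(proj2 (tsolve_spec T)); last lia.
apply: eq_big_seq => i; rewrite mem_zrange => hi; congr (_ * _).
by rewrite /P (_ : T = absz (N - i)%R + (T - absz (N - i)%R))%N ?tsolve_stable //; lia.
Qed.

End Solve.
End Unitriangular.

Lemma binz0 i : binz i 0 = 1.
Proof. by case: i => n /=; rewrite bin0. Qed.

Lemma binzS i k : binz (i + 1) k.+1 = binz i k.+1 + binz i k.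
Proof.
case: i => [n|[|n]].
- by rewrite (_ : Posz n + 1 = Posz n.+1) /= ?binS ?PoszD 1?addrC // -addn1 PoszD.
- by rewrite (_ : Negz 0 + 1 = 0) /= ?bin0n ?add0n ?binn ?exprS /=; [ring | rewrite NegzE; lia].
- rewrite (_ : Negz n.+1 + 1 = Negz n); last by rewrite !NegzE; lia.
  by rewrite /= addSn addnS exprS (binS (n + k).+1) !PoszD addSn; ring.
Qed.

(** * Pseudodifferential operators *)

Section Derivation.
Variable R : comNzRingType.
Variable D : R -> R.
Hypothesis DD : forall x y, D (x + y) = D x + D y.
Hypothesis DM : forall x y, D (x * y) = D x * y + x * D y.

Lemma der0 : D 0 = 0.
Proof. by apply: (addrI (D 0)); rewrite -DD !addr0. Qed.

Lemma der1 : D 1 = 0.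
Proof. by apply: (addrI (D 1)); rewrite addr0 -{3}(mulr1 1) DM mulr1 mul1r. Qed.

Lemma derN x : D (- x) = - D x.
Proof. by apply: (addrI (D x)); rewrite -DD !subrr der0. Qed.

Lemma der_sum (I : Type) (r : seq I) (P : pred I) (F : I -> R) :
  D (\sum_(i <- r | P i) F i) = \sum_(i <- r | P i) D (F i).
Proof. exact: (big_morph D DD der0). Qed.

Lemma der_nat n : D n%:R = 0.
Proof. by elim: n => [|n IH]; rewrite ?der0 // -addn1 natrD DD IH der1 addr0. Qed.

Lemma der_intM (z : int) x : D (z%:~R * x) = z%:~R * D x.
Proof.
have Dz : D z%:~R = 0 by case: z => n; rewrite ?NegzE ?mulrNz ?derN der_nat ?oppr0.
by rewrite DM Dz mul0r add0r.
Qed.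

Lemma iter_der0 k : iter k D 0 = 0.
Proof. by elim: k => //= k ->; apply: der0. Qed.

Implicit Types (A B C X Y : series R) (N : int).

(* [dcomp i B] is the composite [d^i o B], with the truncation of the Leibniz sum
   used by [pmul]. *)
Definition dcomp (i : int) B : series R := fun m =>
  \sum_(k < absz (deg B - m + i + 1)) (binz i k)%:~R * iter k D (B (m - i + k%:Z)).

Lemma dcompE B N i m c : bounded_by B N -> N - m + i + 1 <= c%:Z ->
  dcomp i B m = \sum_(k < c) (binz i k)%:~R * iter k D (B (m - i + k%:Z)).
Proof.
move=> hB hc; have hdeg := bounded_deg (ex_intro _ N hB).
rewrite /dcomp; apply: (@sum_ord_vanishing _
  (fun k : nat => (binz i k)%:~R * iter k D (B (m - i + k%:Z))) _ _
  (minn (absz (deg B - m + i + 1)) c)).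
- exact: geq_minl.
- exact: geq_minr.
move=> k; rewrite geq_min => /orP[] hk.
  by rewrite hdeg ?iter_der0 ?mulr0 //; lia.
by rewrite hB ?iter_der0 ?mulr0 //; lia.
Qed.

Lemma dcomp_bounded B N i : bounded_by B N -> bounded_by (dcomp i B) (i + N).
Proof. by move=> hB m hm; rewrite (@dcompE _ _ _ _ 0 hB) ?big_ord0 //; lia. Qed.

Lemma dcomp0 B N : bounded_by B N -> dcomp 0 B = B.
Proof.
move=> hB; apply: functional_extensionality => m.
rewrite (@dcompE _ _ _ _ (absz (N - m + 1)).+1 hB); last lia.
rewrite big_ord_recl big1 => [|k _]; last by rewrite mul0r.
by rewrite binz0 mul1r addr0 /=; congr B; lia.
Qed.

(* [pder X] is the composite [d o X]. *)
Definition pder X : series R := fun m => D (X m) + X (m - 1).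

Lemma pder_bounded X N : bounded_by X N -> bounded_by (pder X) (N + 1).
Proof. by move=> hX m hm; rewrite /pder !hX ?der0 ?addr0 //; lia. Qed.

Lemma pder_inj X Y N : bounded_by X N -> bounded_by Y N -> pder X = pder Y -> X = Y.
Proof.
move=> hX hY XY; apply: functional_extensionality.
apply: (@int_ind_down _ N) => [j hj|M IH]; first by rewrite hX ?hY.
have := congr1 (fun f => f (M + 1)) XY; rewrite /pder IH ?addrK; last lia.
by move/addrI.
Qed.

Lemma dcompS B N i : bounded_by B N -> dcomp (i + 1) B = pder (dcomp i B).
Proof.
move=> hB; apply: functional_extensionality => m; rewrite /pder.
set c := absz (N - m + i + 2).
rewrite (@dcompE _ _ _ _ c.+1 hB); last lia.
rewrite (@dcompE _ _ _ (m - 1) c.+1 hB); last lia.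
rewrite (@dcompE _ _ _ _ c hB); last lia.
rewrite !big_ord_recl !binz0 /= !mul1r der_sum [RHS]addrCA.
congr (_ + _); first by congr B; lia.
rewrite -big_split; apply: eq_bigr => k _.
rewrite /bump /= add1n binzS intrD mulrDl addrC der_intM /= add0n.
by congr (_ * D (iter _ D (B _)) + _ * D (iter _ D (B _))); lia.
Qed.

Lemma pmulE A B NA NB a b m : bounded_by A NA -> bounded_by B NB ->
  a <= m - NB -> NA <= b ->
  pmul D A B m = \sum_(i <- zrange a b) A i * dcomp i B m.
Proof.
move=> hA hB ha hb.
have hdA := bounded_deg (ex_intro _ NA hA); have hdB := bounded_deg (ex_intro _ NB hB).
have out NA' NB' a' b' i : bounded_by A NA' -> bounded_by B NB' ->
    a' <= m - NB' -> NA' <= b' -> ~~ (a' <= i <= b') -> A i * dcomp i B m = 0.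
  move=> hA' hB' ha' hb' hi; case: (lerP i NA') => hiA; last by rewrite hA' ?mul0r.
  by rewrite (dcomp_bounded hB') ?mulr0 //; lia.
transitivity (\sum_(i <- zrange (m - deg B) (deg A)) A i * dcomp i B m).
  by apply: eq_bigr => i _; rewrite /dcomp mulr_sumr; apply: eq_bigr => k _; ring.
apply: zsum_supp => i.
- exact: (out _ _ _ _ _ hdA hdB (lexx _) (lexx _)).
- exact: (out _ _ _ _ _ hA hB ha hb).
Qed.

Lemma pmul_bounded A B NA NB : bounded_by A NA -> bounded_by B NB ->
  bounded_by (pmul D A B) (NA + NB).
Proof.
move=> hA hB m hm; rewrite (pmulE hA hB (lexx _) (lexx _)) big1_seq // => i.
by rewrite mem_zrange => /andP[_ hi]; rewrite (dcomp_bounded hB) ?mulr0 //; lia.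
Qed.

Lemma pmul_pder Y C NY NC : bounded_by Y NY -> bounded_by C NC ->
  pmul D (pder Y) C = pder (pmul D Y C).
Proof.
move=> hY hC; apply: functional_extensionality => m.
set a := m - NC - 1; set b := NY + 1.
rewrite /pder (pmulE (pder_bounded hY) hC (a := a) (b := b)); try lia.
rewrite !(pmulE hY hC (a := a) (b := b)); try lia.
rewrite der_sum -big_split /=.
have shifted : \sum_(i <- zrange a b) Y (i - 1) * dcomp i C m =
    \sum_(i <- zrange a b) Y i * dcomp (i + 1) C m.
  rewrite -{1}(subrK 1 a) -{1}(subrK 1 b) -zsum_shift; under eq_bigr do rewrite addrK.
  apply: zsum_supp => i hi; (case: (lerP i NY) => hiY; last by rewrite hY ?mul0r);
    by rewrite (dcomp_bounded hC) ?mulr0 //; lia.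
rewrite /pder; under eq_bigr do rewrite mulrDl.
rewrite big_split /= shifted -big_split; apply: eq_bigr => i _.
by rewrite (dcompS i hC) /pder DM mulrDr /= addrA.
Qed.

Lemma dcomp_pmul B C NB NC i : bounded_by B NB -> bounded_by C NC ->
  pmul D (dcomp i B) C = dcomp i (pmul D B C).
Proof.
move=> hB hC; have hBC := pmul_bounded hB hC.
elim/int_ind_updown: i => [|i IH|i IH].
- by rewrite (dcomp0 hB) (dcomp0 hBC).
- by rewrite (dcompS i hB) (pmul_pder (dcomp_bounded hB) hC) IH (dcompS i hBC).
apply: (@pder_inj _ _ (i + NB + NC)).
- exact: pmul_bounded (dcomp_bounded hB) hC.
- by rewrite -addrA; apply: dcomp_bounded.
by rewrite -(pmul_pder (dcomp_bounded hB) hC) -(dcompS i hB) IH (dcompS i hBC).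
Qed.

Lemma pmulA A B C NA NB NC : bounded_by A NA -> bounded_by B NB -> bounded_by C NC ->
  pmul D A (pmul D B C) = pmul D (pmul D A B) C.
Proof.
move=> hA hB hC; have hAB := pmul_bounded hA hB; have hBC := pmul_bounded hB hC.
apply: functional_extensionality => m.
rewrite (pmulE hAB hC (lexx _) (lexx _)) (pmulE hA hBC (lexx _) (lexx _)).
have expand i : i \in zrange (m - (NB + NC)) NA -> A i * dcomp i (pmul D B C) m =
    \sum_(j <- zrange (m - NC) (NA + NB)) A i * (dcomp i B j * dcomp j C m).
  rewrite mem_zrange => hi; rewrite -(dcomp_pmul _ hB hC).
  by rewrite (pmulE (dcomp_bounded hB) hC (lexx _) (_ : i + NB <= NA + NB)) ?mulr_sumr //; lia.
rewrite (eq_big_seq _ expand) exchange_big; apply: eq_big_seq => j.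
rewrite mem_zrange => hj; rewrite (pmulE hA hB (_ : m - (NB + NC) <= j - NB) (lexx _)); last lia.
by rewrite mulr_suml; apply: eq_bigr => i _; rewrite mulrA.
Qed.

Lemma pone_bounded : bounded_by (pone R) 0.
Proof. exact: zpow_bounded. Qed.

Lemma pmul1p X N : bounded_by X N -> pmul D (pone R) X = X.
Proof.
move=> hX; apply: functional_extensionality => m.
rewrite (pmulE pone_bounded hX (lexx _) (lexx _)) zsum_kron (dcomp0 hX).
by case: ifP => // h; rewrite hX //; move/negbT: h; lia.
Qed.

Lemma dcomp_pone i : dcomp i (pone R) = zpow i.
Proof.
apply: functional_extensionality => m.
rewrite (@dcompE _ _ _ _ (absz (0 - m + i + 1)).+1 pone_bounded); last lia.
rewrite big_ord_recl big1 => [|k _]; last first.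
  by rewrite /= add0n -iterS iterSr der_nat iter_der0 mulr0.
by rewrite binz0 mul1r addr0 /= /pone /sone /zpow; congr _%:R; apply/eqP/eqP; lia.
Qed.

Lemma pmulp1 X N : bounded_by X N -> pmul D X (pone R) = X.
Proof.
move=> hX; apply: functional_extensionality => m.
rewrite (pmulE hX pone_bounded (lexx _) (lexx _)) subr0.
under eq_bigr do rewrite dcomp_pone mulrC /zpow eq_sym.
by rewrite zsum_kron lexx; case: ifP => // h; rewrite hX //; move/negbT: h; lia.
Qed.

Lemma monic_diff_invertible L p : monic_diff L p ->
  exists Y, bounded Y /\ pmul D L Y = pone R /\ pmul D Y L = pone R.
Proof.
move=> mL; have hL := monic_diff_bounded mL; case: mL => Lp _.
pose c i m := dcomp i L m.
have c_diag i : c i (i + p) = 1.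
  rewrite /c (@dcompE _ _ _ _ 1 hL) ?big_ord1 ?binz0 /= ?mul1r; last lia.
  by rewrite -Lp; congr L; lia.
have pmul_tcomb X N : bounded_by X N -> pmul D X L = tcomb p c N X.
  by move=> hX; apply: functional_extensionality => m; rewrite (pmulE hX hL (lexx _) (lexx _)).
have [Y [hY YL]] := tcomb_surj c_diag pone_bounded; rewrite -(pmul_tcomb _ _ hY) in YL.
have hLY : bounded_by (pmul D L Y) 0 by apply: bounded_byW (pmul_bounded hL hY); lia.
exists Y; split; [by exists (0 - p) | split => //].
apply: (tcomb_inj c_diag hLY pone_bounded).
rewrite -(pmul_tcomb _ _ hLY) -(pmul_tcomb _ _ pone_bounded).
by rewrite -(pmulA hL hY hL) YL (pmulp1 hL) (pmul1p hL).
Qed.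

Lemma ppow_bounded L N j : bounded_by L N -> bounded_by (ppow D L j) (j%:Z * N).
Proof.
move=> hL; elim: j => [|j IH]; first by rewrite mul0r; apply: pone_bounded.
have -> : j.+1%:Z * N = j%:Z * N + N by rewrite -addn1 PoszD mulrDl mul1r.
exact: (pmul_bounded IH hL).
Qed.

(** * The Faa di Bruno basis and the Lax map *)

Section FaaDiBruno.
Variable hc : nat -> R.

Lemma hser_bounded : bounded_by (hser hc) 1.
Proof. by move=> k hk; rewrite /hser; case: eqP => e; [lia | case: ifP => // h; lia]. Qed.

Definition dh Y : series R := sadd (sder D Y) (smul (hser hc) Y).

Lemma dhE Y N m : bounded_by Y N ->
  dh Y m = D (Y m) + \sum_(s <- zrange (m - N) 1) hser hc s * Y (m - s).
Proof. by move=> hY; rewrite /dh /sadd /sder (smulE hser_bounded hY (lexx _) (lexx _)). Qed.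

Lemma dh_bounded Y N : bounded_by Y N -> bounded_by (dh Y) (N + 1).
Proof. by move=> hY m hm; rewrite (dhE _ hY) hY ?der0 ?add0r ?zsum_nil //; lia. Qed.

Lemma dhS Y N M : bounded_by Y N -> M <= N ->
  dh Y (M + 1) = Y M + (D (Y (M + 1)) +
    \sum_(s <- zrange (M + 1 - N) 0) hser hc s * Y (M + 1 - s)).
Proof.
move=> hY hM; rewrite (dhE _ hY) [X in zrange _ X](_ : 1 = 0 + 1) // zsum_recr; last lia.
rewrite (_ : hser hc (0 + 1) = 1) // (_ : M + 1 - (0 + 1) = M); last lia.
by rewrite mul1r addrA addrC.
Qed.

Lemma dh_top Y N : bounded_by Y N -> dh Y (N + 1) = Y N.
Proof.
by move=> hY; rewrite (dhS hY (lexx N)) (hY (N + 1)) ?der0 ?add0r ?zsum_nil ?addr0 //; lia.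
Qed.

Lemma bounded_by_dh Y N : bounded Y -> bounded_by (dh Y) (N + 1) -> bounded_by Y N.
Proof.
move=> [N0 hY0] hdh; apply: (@int_ind_down _ N0) => [j hj _|M IH hM]; first exact: hY0.
have hYM : bounded_by Y M by move=> j hj; apply: IH => //; lia.
by rewrite -(dh_top hYM) hdh //; lia.
Qed.

Lemma dh_zshift Y N r : bounded_by Y N -> dh (zshift r Y) = zshift r (dh Y).
Proof.
move=> hY; have hYr := zshift_bounded (r := r) hY.
apply: functional_extensionality => m; rewrite /zshift (dhE _ hYr) (dhE _ hY).
rewrite (_ : m - (N + r) = m - r - N); last lia.
by congr (_ + _); apply: eq_bigr => s _; congr (_ * Y _); lia.
Qed.

Lemma dh_inj Y1 Y2 N : bounded_by Y1 N -> bounded_by Y2 N -> dh Y1 = dh Y2 -> Y1 = Y2.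
Proof.
move=> hY1 hY2 eY; apply: functional_extensionality.
apply: (@int_ind_down _ N) => [j hj|M IH]; first by rewrite hY1 ?hY2.
case: (ltrP N M) => hM; first by rewrite hY1 ?hY2.
have := congr1 (fun f => f (M + 1)) eY.
rewrite (dhS hY1 hM) (dhS hY2 hM) (IH (M + 1)); last lia.
rewrite (eq_big_seq (fun s => hser hc s * Y2 (M + 1 - s))); first by move/addIr.
by move=> s; rewrite mem_zrange => hs; rewrite IH //; lia.
Qed.

Variable hf : int -> series R.
Hypothesis Hhf : FdB D (hser hc) hf.

Lemma hf_succ j : hf (j + 1) = dh (hf j).
Proof. by case: Hhf => _ [_ ->]. Qed.

Lemma hf_monic j : bounded_by (hf j) j /\ hf j j = 1.
Proof.
elim/int_ind_updown: j => [|j [hb h1]|j [hb h1]].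
- by case: Hhf => _ [-> _]; split; [apply: zpow_bounded | rewrite /sone eqxx].
- by rewrite hf_succ; split; [apply: dh_bounded | rewrite (dh_top hb)].
have hbj : bounded_by (hf j) j by apply: bounded_by_dh; [case: Hhf | rewrite -hf_succ].
by split => //; rewrite -(dh_top hbj) -hf_succ.
Qed.

Lemma hf_bounded j : bounded_by (hf j) j. Proof. by case: (hf_monic j). Qed.
Lemma hf_lead j : hf j j = 1. Proof. by case: (hf_monic j). Qed.

Definition phiinv (P : series R) : series R :=
  fun m => \sum_(j <- zrange m (deg P)) P j * hf j m.

Lemma phiinvE P N a b m : bounded_by P N -> a <= m -> N <= b ->
  phiinv P m = \sum_(j <- zrange a b) P j * hf j m.
Proof.
move=> hP ha hb.
have out N' a' b' j : bounded_by P N' -> a' <= m -> N' <= b' ->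
    ~~ (a' <= j <= b') -> P j * hf j m = 0.
  move=> hP' ha' hb' hj; case: (lerP j N') => hjN; last by rewrite hP' ?mul0r.
  by rewrite hf_bounded ?mulr0 //; lia.
have hdP := bounded_deg (ex_intro _ N hP).
apply: zsum_supp => j; first exact: (out _ _ _ _ hdP (lexx _) (lexx _)).
exact: (out _ _ _ _ hP ha hb).
Qed.

Lemma phiinv_bounded P N : bounded_by P N -> bounded_by (phiinv P) N.
Proof. by move=> hP m hm; rewrite (phiinvE hP (lexx m) (lexx N)) zsum_nil. Qed.

Lemma phiinv_zpow j : phiinv (zpow j) = hf j.
Proof.
apply: functional_extensionality => m.
rewrite (phiinvE (@zpow_bounded _ j) (lexx m) (lexx j)) zsum_kron lexx andbT.
by case: ifP => // /negbT hm; rewrite hf_bounded //; lia.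
Qed.

Lemma tcomb_phiinv P N : bounded_by P N -> tcomb 0 hf N P = phiinv P.
Proof.
move=> hP; apply: functional_extensionality => m.
by rewrite (phiinvE hP (_ : m - 0 <= m) (lexx N)) // subr0.
Qed.

Lemma hf_diag j : hf j (j + 0) = 1.
Proof. by rewrite addr0 hf_lead. Qed.

Lemma phi_spec k K : bounded_by k K -> bounded (phi hf k) /\ phiinv (phi hf k) = k.
Proof.
move=> hk; have [P [hP tP]] := tcomb_surj hf_diag hk.
have ex : exists P, bounded P /\ forall m, k m = \sum_(j <- zrange m (deg P)) P j * hf j m.
  by exists P; split; [exists (K - 0) | move=> m; rewrite -tP (tcomb_phiinv hP)].
have [hphi ephi] := epsilon_spec (inhabits (fun=> 0)) _ ex.
by split => //; apply: functional_extensionality => m; apply/esym/ephi.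
Qed.

Lemma phiinvK P N : bounded_by P N -> phi hf (phiinv P) = P.
Proof.
move=> hP; have [[N' hphi] ephi] := phi_spec (phiinv_bounded hP).
have hPM : bounded_by P (Num.max N N') by apply: bounded_byW hP; rewrite le_max lexx.
have hphiM : bounded_by (phi hf (phiinv P)) (Num.max N N').
  by apply: bounded_byW hphi; rewrite le_max lexx orbT.
apply: (tcomb_inj hf_diag hphiM hPM).
by rewrite !tcomb_phiinv ?ephi.
Qed.

Lemma phiinv_lincomb (I : Type) (r : seq I) (a : I -> R) X0 (X : I -> series R) N :
  bounded_by X0 N -> (forall i, bounded_by (X i) N) ->
  phiinv (fun k => X0 k + \sum_(i <- r) a i * X i k) =
  fun m => phiinv X0 m + \sum_(i <- r) a i * phiinv (X i) m.
Proof.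
move=> h0 hX.
have hS : bounded_by (fun k => X0 k + \sum_(i <- r) a i * X i k) N.
  by move=> k hk; rewrite h0 // add0r big1 // => i _; rewrite hX ?mulr0.
apply: functional_extensionality => m.
rewrite (phiinvE hS (lexx m) (lexx N)) (phiinvE h0 (lexx m) (lexx N)).
under eq_bigr do rewrite mulrDl mulr_suml.
rewrite big_split /= exchange_big; congr (_ + _); apply: eq_bigr => i _.
by rewrite (phiinvE (hX i) (lexx m) (lexx N)) mulr_sumr; apply: eq_bigr => j _; rewrite mulrA.
Qed.

Lemma phi_KPcurrent (j : nat) Hj : KPcurrent hf j Hj ->
  monic_diff (phi hf Hj) j /\ phiinv (phi hf Hj) = Hj.
Proof.
(* Only the triangular shape of [H^(j)] is used, not its normalisation. *)
case=> [[p ->] _].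
pose P k := zpow j k + \sum_(i < j.-1) p i * zpow i k.
have hP : monic_diff P j.
  apply: (monic_diff_lincomb _ _ (q := fun i : 'I_j.-1 => i%:Z)) => [|i|i];
    [exact: monic_zpow | by have := ltn_ord i; lia | exact: monic_zpow].
have eP : phiinv P = fun k => hf j k + \sum_(i < j.-1) p i * hf i k.
  rewrite (phiinv_lincomb _ _ (@zpow_bounded _ j)) => [|i]; last first.
    by apply: bounded_byW (@zpow_bounded _ i); have := ltn_ord i; lia.
  apply: functional_extensionality => m; rewrite phiinv_zpow.
  by under eq_bigr do rewrite phiinv_zpow.
by rewrite -eP (phiinvK (monic_diff_bounded hP)).
Qed.

Lemma phiinv_pder X N : bounded_by X N -> phiinv (pder X) = dh (phiinv X).
Proof.
move=> hX; apply: functional_extensionality => m.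
case: (ltrP (N + 1) m) => hm.
  by rewrite (phiinv_bounded (pder_bounded hX)) ?(dh_bounded (phiinv_bounded hX)).
have hX_phiinv m' : m - 1 <= m' ->
    phiinv X m' = \sum_(j <- zrange (m - 1) N) X j * hf j m'.
  by move=> hm'; apply: (phiinvE hX hm' (lexx N)).
have smul_phiinv : \sum_(s <- zrange (m - N) 1) hser hc s * phiinv X (m - s) =
    \sum_(j <- zrange (m - 1) N) X j * smul (hser hc) (hf j) m.
  rewrite (eq_big_seq
    (fun s => \sum_(j <- zrange (m - 1) N) hser hc s * (X j * hf j (m - s)))).
    rewrite exchange_big; apply: eq_big_seq => j; rewrite mem_zrange => hj.
    rewrite (smulE hser_bounded (hf_bounded (j := j)) (_ : m - N <= m - j) (lexx 1)); last lia.
    by rewrite mulr_sumr; apply: eq_bigr => s _; rewrite mulrCA.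
  by move=> s; rewrite mem_zrange => hs; rewrite hX_phiinv ?mulr_sumr //; lia.
have shifted : \sum_(j <- zrange (m - 1) (N + 1)) X (j - 1) * hf j m =
    \sum_(j <- zrange (m - 1) N) X j * hf (j + 1) m.
  rewrite -{1}(subrK 1 (m - 1)) -{1}(subrK 1 N) -zsum_shift; under eq_bigr do rewrite addrK.
  apply: zsum_supp => j hj; (case: (lerP j N) => hjN; last by rewrite hX ?mul0r);
    by rewrite hf_bounded ?mulr0 //; lia.
rewrite (dhE _ (phiinv_bounded hX)) smul_phiinv (hX_phiinv m) ?der_sum; last lia.
rewrite (phiinvE (pder_bounded hX) (_ : m - 1 <= m) (lexx _)); last lia.
rewrite /pder; under eq_bigr do rewrite mulrDl.
rewrite big_split /= shifted zsum_recr; last lia.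
rewrite (hX (N + 1)) ?der0 ?mul0r ?addr0; last lia.
rewrite -!big_split; apply: eq_bigr => j _.
by rewrite hf_succ /dh /sadd /sder DM mulrDr /= addrA.
Qed.

Lemma phiinv_pmul P Q NP NQ m : bounded_by P NP -> bounded_by Q NQ ->
  phiinv (pmul D P Q) m = \sum_(i <- zrange (m - NQ) NP) P i * phiinv (dcomp i Q) m.
Proof.
move=> hP hQ; rewrite (phiinvE (pmul_bounded hP hQ) (lexx m) (lexx _)).
rewrite (eq_big_seq (fun j => \sum_(i <- zrange (m - NQ) NP) P i * (dcomp i Q j * hf j m))).
  rewrite exchange_big; apply: eq_big_seq => i; rewrite mem_zrange => hi.
  rewrite (phiinvE (dcomp_bounded hQ) (lexx m) (_ : i + NQ <= NP + NQ)) ?mulr_sumr //; lia.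
move=> j; rewrite mem_zrange => hj.
rewrite (pmulE hP hQ (_ : m - NQ <= j - NQ) (lexx NP)); last lia.
by rewrite mulr_suml; apply: eq_bigr => i _; rewrite mulrA.
Qed.

Lemma phiinv_dcomp_zpow Q NQ r : bounded_by Q NQ -> phiinv Q = zpow r ->
  forall i, phiinv (dcomp i Q) = zshift r (hf i).
Proof.
move=> hQ eQ; have hr : r <= NQ.
  by apply: (@zpow_bounded_le R); rewrite -eQ; apply: phiinv_bounded.
have dhS_zshift i : dh (zshift r (hf i)) = zshift r (hf (i + 1)).
  by rewrite (dh_zshift _ (hf_bounded (j := i))) -hf_succ.
elim/int_ind_updown => [|i IH|i IH].
- rewrite (dcomp0 hQ) eQ; case: Hhf => _ [-> _]; apply: functional_extensionality => m.
  by rewrite /zpow /zshift /sone; congr _%:R; apply/eqP/eqP; lia.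
- by rewrite (dcompS i hQ) (phiinv_pder (dcomp_bounded hQ)) IH dhS_zshift.
apply: (@dh_inj _ _ (i + NQ)).
- exact: phiinv_bounded (dcomp_bounded hQ).
- by apply: bounded_byW (zshift_bounded (r := r) (hf_bounded (j := i))); lia.
by rewrite -(phiinv_pder (dcomp_bounded hQ)) -(dcompS i hQ) IH dhS_zshift.
Qed.

Lemma phiinv_pmul_zpow P Q NP NQ r : bounded_by P NP -> bounded_by Q NQ ->
  phiinv Q = zpow r -> phiinv (pmul D P Q) = zshift r (phiinv P).
Proof.
move=> hP hQ eQ; have hr : r <= NQ.
  by apply: (@zpow_bounded_le R); rewrite -eQ; apply: phiinv_bounded.
apply: functional_extensionality => m; rewrite (phiinv_pmul _ hP hQ).
rewrite /zshift (phiinvE hP (_ : m - NQ <= m - r) (lexx NP)); last lia.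
by apply: eq_bigr => i _; rewrite (phiinv_dcomp_zpow hQ eQ).
Qed.

Lemma phi_lax : bounded (phi hf (zser R)) /\ phiinv (phi hf (zser R)) = zpow 1.
Proof. exact: phi_spec (@zpow_bounded R 1). Qed.

Lemma phiinv_pmul_lax_pow P N j : bounded_by P N ->
  phiinv (pmul D P (ppow D (phi hf (zser R)) j)) = zshift j (phiinv P).
Proof.
have [[NL hL] eL] := phi_lax.
move=> hP; elim: j => [|j IH].
  by rewrite (pmulp1 hP); apply: functional_extensionality => m; rewrite /zshift subr0.
rewrite [ppow _ _ _]/= (pmulA hP (ppow_bounded (j := j) hL) hL).
rewrite (phiinv_pmul_zpow (pmul_bounded hP (ppow_bounded (j := j) hL)) hL eL) IH.
by apply: functional_extensionality => m; rewrite /zshift; congr phiinv; lia.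
Qed.

(** * Rational Lax operators *)

Section KPcurrents.
Variables (H : nat -> series R) (ac : nat -> R).
Hypothesis HH : forall j : nat, KPcurrent hf j (H j).

Lemma Lgen_zshift l (n : nat) :
  inS H l ac -> inS H (l + n%:Z) ac -> Lgen H ac (l + n%:Z) = zshift n (Lgen H ac l).
Proof.
move=> HS1 HS2; apply: functional_extensionality => k.
by rewrite /zshift -HS1 -HS2; congr aser; lia.
Qed.

Lemma phi_Lgen l : -1 <= l ->
  monic_diff (phi hf (Lgen H ac l)) (l + 1) /\ phiinv (phi hf (Lgen H ac l)) = Lgen H ac l.
Proof.
move=> hl; set p := absz (l + 1); have hp : l + 1 = p%:Z by rewrite /p; lia.
have hlt (t : 'I_p) : (absz (l - t%:Z))%:Z = l - t%:Z by have := ltn_ord t; lia.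
have KP i := phi_KPcurrent (HH i).
pose Q k := phi hf (H p) k + \sum_(t < p) ac t * phi hf (H (absz (l - t%:Z))) k.
have hQ : monic_diff Q (l + 1).
  apply: (monic_diff_lincomb _ _ (q := fun t : 'I_p => l - t%:Z)) => [|t|t].
  - by rewrite hp; case: (KP p).
  - lia.
  - by have := proj1 (KP (absz (l - t%:Z))); rewrite hlt.
suff eQ : phiinv Q = Lgen H ac l by rewrite -eQ (phiinvK (monic_diff_bounded hQ)).
rewrite (phiinv_lincomb _ _ (N := l + 1)) => [||t]; first last.
- apply: bounded_byW (monic_diff_bounded (proj1 (KP (absz (l - t%:Z))))); rewrite hlt; lia.
- by rewrite hp; apply: monic_diff_bounded; case: (KP p).
apply: functional_extensionality => m; rewrite /Lgen -/p (proj2 (KP p)).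
by congr (_ + _); apply: eq_bigr => t _; rewrite (proj2 (KP _)).
Qed.

Lemma phi_Lgen_shift l n : -1 <= l -> inS H l ac -> inS H (l + n%:Z) ac ->
  phi hf (Lgen H ac (l + n%:Z)) =
  pmul D (phi hf (Lgen H ac l)) (ppow D (phi hf (zser R)) n).
Proof.
move=> hl HS1 HS2; have [md1 e1] := phi_Lgen hl; have hL1 := monic_diff_bounded md1.
have [[NL hL] _] := phi_lax; have hLn := ppow_bounded (j := n) hL.
by rewrite -(phiinvK (pmul_bounded hL1 hLn)) (phiinv_pmul_lax_pow n hL1) e1 Lgen_zshift.
Qed.

Lemma lax_pow_Lgen_ratio l n Y : -1 <= l -> inS H l ac -> inS H (l + n%:Z) ac ->
  bounded Y -> pmul D Y (phi hf (Lgen H ac l)) = pone R ->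
  ppow D (phi hf (zser R)) n = pmul D Y (phi hf (Lgen H ac (l + n%:Z))).
Proof.
move=> hl HS1 HS2 [NY hY] YL1.
have hL1 := monic_diff_bounded (proj1 (phi_Lgen hl)).
have [[NL hL] _] := phi_lax; have hLn := ppow_bounded (j := n) hL.
by rewrite (phi_Lgen_shift hl HS1 HS2) (pmulA hY hL1 hLn) YL1 (pmul1p hLn).
Qed.

End KPcurrents.

End FaaDiBruno.
End Derivation.

Theorem mainTheorem3 (R : comNzRingType) (D : R -> R)
    (HDadd : forall x y : R, D (x + y) = D x + D y)
    (HDmul : forall x y : R, D (x * y) = D x * y + x * D y)
    (hc ac : nat -> R) (hf : int -> series R) (H : nat -> series R)
    (Hhf : FdB D (hser hc) hf) (HH : forall j : nat, KPcurrent hf j (H j))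
    (l : int) (n : nat) (hl : -1 <= l) (hn : (0 < n)%N)
    (HS1 : inS H l ac) (HS2 : inS H (l + n%:Z) ac) :
  let L1 := phi hf (Lgen H ac l) in
  let L2 := phi hf (Lgen H ac (l + n%:Z)) in
  monic_diff L1 (l + 1) /\ monic_diff L2 (l + n%:Z + 1) /\
  exists L1inv : series R,
    bounded L1inv /\ pmul D L1 L1inv = pone R /\ pmul D L1inv L1 = pone R /\
    ppow D (phi hf (zser R)) n = pmul D L1inv L2.
Proof.
move=> L1 L2; have hln : -1 <= l + n%:Z by lia.
have [md1 _] := phi_Lgen HDadd Hhf ac HH hl.
have [md2 _] := phi_Lgen HDadd Hhf ac HH hln.
have [Y [hY [L1Y YL1]]] := monic_diff_invertible HDadd HDmul md1.
split=> //; split=> //; exists Y; do !split => //.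
exact: (lax_pow_Lgen_ratio HDadd HDmul Hhf HH hl HS1 HS2 hY YL1).
Qed.
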